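(* The subspace $\mathbf{\Pi}$ is a graded sub-bialgebra of $(\textbf{W},\nabla_{\sqcup\!\sqcup},\iota_{\sqcup\!\sqcup},\Delta_\odot,\epsilon_\odot)$.
   Context: Let $\Bbbk$ be a field. A word is a finite sequence of positive integers. For a word $w=w_1\cdots w_m$ with $\max(w)\le n\in\mathbb{N}$, $[w,n]$ denotes the linear endomorphism of the shuffle algebra (span of all words) sending a word $v$ of length $n$ to $v_{w_1}\cdots v_{w_m}$ and other words to $0$; $\textbf{W}$ is the span of all such $[w,n]$, graded by $\deg[w,n]=m$. $\textbf{W}$ is a graded bialgebra with product $\nabla_{\sqcup\!\sqcup}([v,m]\otimes[w,n]) = [v\sqcup\!\sqcup (w\uparrow m), m+n]$ ($\sqcup\!\sqcup$ the shuffle product of words, $w\uparrow m$ adds $m$ to each letter), unit $\iota_{\sqcup\!\sqcup}(1)=[\emptyset,0]$, coproduct $\Delta_\odot([w,n])=\sum_{i=0}^m [w_1\cdots w_i,n]\otimes[w_{i+1}\cdots w_m,n]$ and counit $\epsilon_\odot([w,n])=1$ if $w=\emptyset$, else $0$. For $\pi$ in the symmetric group $S_{n+1}$ with simple transpositions $s_i=(i,i+1)$, let $\mathcal{R}(\pi)$ be its set of reduced words and $[\pi]=\sum_{w\in\mathcal{R}(\pi)}[w,n]\in\textbf{W}$. Let $\mathbf{\Pi}_n$ be the span of $\{[\pi]:\pi\in S_{n+1}\}$ and $\mathbf{\Pi}=\bigoplus_{n\in\mathbb{N}}\mathbf{\Pi}_n$. *)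

From mathcomp Require Import all_boot all_order all_algebra all_fingroup.
Set Implicit Arguments. Unset Strict Implicit. Unset Printing Implicit Defensive.
Import GRing.Theory.
Local Open Scope ring_scope.

(* Words are seq nat (letters are positive integers).  A basis element
   [w,n] of W is the pair (w, n).  An element of W is represented by its
   coefficient function on pairs (w,n); elements of the span are the finitely
   supported ones, and all elements we consider (elements of Pi) are such. *)

Definition Wt (K : fieldType) := (seq nat * nat) -> K.
Definition WWt (K : fieldType) := (seq nat * nat) -> (seq nat * nat) -> K.

(* shuffle product of words, as a list of words with multiplicity *)
Fixpoint shuffle (u v : seq nat) : seq (seq nat) :=
  match u with
  | [::] => [:: v]
  | a :: u' =>
      let fix sh (v : seq nat) : seq (seq nat) :=
        match v with
        | [::] => [:: u]
        | b :: v' => map (cons a) (shuffle u' v) ++ map (cons b) (sh v')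
        end in sh v
  end.

Definition shiftw (m : nat) (w : seq nat) : seq nat := map (addn m) w.

Fixpoint words (k n : nat) : seq (seq nat) :=
  match k with
  | 0 => [:: [::]]
  | k'.+1 => [seq i :: w | i <- iota 1 n, w <- words k' n]
  end.

(* product nabla: linear extension of
   [v,m] (x) [w,n] |-> [v shuffle (w up m), m+n].
   Coefficient of [u,N] in x*y: sum over the (finitely many) basis pairs
   [v,m], [w,N-m] with |v|+|w| = |u| that can contribute. *)
Definition mulW (K : fieldType) (x y : Wt K) : Wt K := fun b =>
  let u := b.1 in let N := b.2 in
  \sum_(m < N.+1) \sum_(k < (size u).+1)
    \sum_(v <- words k m) \sum_(w <- words (size u - k) (N - m))
      x (v, nat_of_ord m) * y (w, N - m) *+ count_mem u (shuffle v (shiftw m w)).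

Definition unitW (K : fieldType) : Wt K := fun b =>
  if (b.1 == [::]) && (b.2 == 0%N) then 1 else 0.

(* coproduct Delta_odot: linear extension of
   [w,n] |-> sum_i [w_1..w_i, n] (x) [w_(i+1)..w_m, n];
   the coefficient of [a,n] (x) [b,n'] is x(a ++ b, n) if n = n', else 0. *)
Definition comulW (K : fieldType) (x : Wt K) : WWt K := fun a b =>
  if a.2 == b.2 then x (a.1 ++ b.1, a.2) else 0.

(* homogeneous component of degree d (deg [w,n] = |w|) *)
Definition homog (K : fieldType) (d : nat) (x : Wt K) : Wt K := fun b =>
  if size b.1 == d then x b else 0.

(* simple transposition s_i = (i, i+1) of S_{n+1} = perms of {1..n+1},
   modelled on 'I_n.+1 = {0..n} (shifted by one) *)
Definition stransp (n i : nat) : 'S_n.+1 := tperm (inord i.-1) (inord i).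

Definition prodw (n : nat) (w : seq nat) : 'S_n.+1 :=
  (\prod_(i <- w) stransp n i)%g.

Definition reduced (n : nat) (pi : 'S_n.+1) (w : seq nat) : bool :=
  [&& all (fun i => 0 < i <= n)%N w, prodw n w == pi &
      all (fun k => all (fun u => prodw n u != pi) (words k n)) (iota 0 (size w))].

(* [pi] = sum_{w in R(pi)} [w, n] *)
Definition pi_elem (K : fieldType) (n : nat) (pi : 'S_n.+1) : Wt K := fun b =>
  if (b.2 == n) && reduced pi b.1 then 1 else 0.

Definition SymAll := {n : nat & 'S_n.+1}.

Definition inPi (K : fieldType) (x : Wt K) : Prop :=
  exists s : seq (K * SymAll),
    forall b, x b = \sum_(p <- s) p.1 * pi_elem K (projT2 p.2) b.

Definition inPiPi (K : fieldType) (t : WWt K) : Prop :=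
  exists s : seq (K * (SymAll * SymAll)),
    forall a b, t a b = \sum_(p <- s)
       p.1 * pi_elem K (projT2 p.2.1) a * pi_elem K (projT2 p.2.2) b.

From mathcomp Require Import all_boot all_order all_algebra all_fingroup.
From mathcomp Require Import zify.
Set Implicit Arguments. Unset Strict Implicit. Unset Printing Implicit Defensive.

(* Let l(p) be the number of inversions of p.  A word is reduced for p iff its
   letters are simple transpositions with product p and its length is l(p); so
   [pi] is homogeneous of degree l(pi), and a reduced word of pi cut in two is
   a pair of reduced words of q, r with q r = pi and l(q) + l(r) = l(pi), and
   conversely, which gives Delta [pi] as a sum of [q] (x) [r].
   The words in the shuffle of R(sg) with the m-shift of R(tu) are those whose
   letters <= m form a reduced word of sg and whose other letters, shifted
   down, form one of tu.  This property is invariant under braid moves, hence,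
   by Matsumoto's argument, constant on the reduced words of each permutation,
   and every word having it is reduced; so [sg] [tu] is a sum of classes [pi]. *)

(** * Inversions and reduced words *)

Definition is_letter (n i : nat) := 0 < i <= n.

Lemma mem_words k n u : (u \in words k n) = (size u == k) && all (is_letter n) u.
Proof.
elim: k u => [|k IH] u /=; first by rewrite inE; case: u.
apply/allpairsP/idP => [[[i w] [hi hw ->]]|] /=.
  move: hw; rewrite IH eqSS => /andP[-> ->]; rewrite andbT /=.
  by move: hi; rewrite mem_iota /is_letter /=; lia.
case: u => [|i w] //= /andP[hs /andP[hi hw]]; exists (i, w); split => //=.
  by move: hi; rewrite mem_iota /is_letter; lia.
by rewrite IH -(eqSS (size w)) hs hw.
Qed.

Lemma uniq_words k n : uniq (words k n).
Proof.
elim: k => [|k IH] //=; apply: allpairs_uniq => //; first exact: iota_uniq.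
by move=> [i w] [j v] _ _ /= [-> ->].
Qed.

Definition swapn (a x : nat) := if x == a.-1 then a else if x == a then a.-1 else x.

Lemma swapn_pred a : swapn a a.-1 = a.
Proof. by rewrite /swapn eqxx. Qed.

Lemma swapn_self a : 0 < a -> swapn a a = a.-1.
Proof. by move=> a0; rewrite /swapn eqxx; case: eqP => //; lia. Qed.

Lemma swapn_out a x : x != a.-1 -> x != a -> swapn a x = x.
Proof. by rewrite /swapn => /negbTE-> /negbTE->. Qed.

Lemma leq_swapn a k m : a <= m -> k <= m -> swapn a k <= m.
Proof. by rewrite /swapn; repeat case: ifP => /eqP ?; lia. Qed.

Lemma ltn_swapn a x y : 0 < a -> (x, y) != (a.-1, a) -> (x, y) != (a, a.-1) ->
  (swapn a x < swapn a y) = (x < y).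
Proof.
rewrite /swapn !xpair_eqE => a0.
by case: (eqVneq x a.-1); case: (eqVneq x a); case: (eqVneq y a.-1);
  case: (eqVneq y a) => /=; lia.
Qed.

Section Coxeter.
Variable n : nat.
Local Notation s_ := (stransp n).
Local Open Scope group_scope.
Implicit Types (p q : 'S_n.+1) (a b : nat) (w : seq nat).

Definition inversion p (ij : 'I_n.+1 * 'I_n.+1) := (ij.1 < ij.2) && (p ij.2 < p ij.1).

Definition ninv p : nat := \sum_ij inversion p ij.

Definition posn p (k : nat) : nat := (p^-1) (inord k).

Definition descent p a := posn p a < posn p a.-1.

Lemma val_inord_letter a : is_letter n a -> (inord a : 'I_n.+1) = a :> nat.
Proof. by move=> ha; rewrite inordK //; case/andP: ha. Qed.

Lemma val_inord_pred a : is_letter n a -> (inord a.-1 : 'I_n.+1) = a.-1 :> nat.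
Proof. by move=> ha; rewrite inordK //; case/andP: ha; lia. Qed.

Lemma stransp_val a x : is_letter n a -> s_ a x = swapn a x :> nat.
Proof.
move=> ha; have a0 : a != a.-1 by case/andP: ha; lia.
rewrite /stransp /swapn.
case: tpermP => [->|->|x1 x2]; rewrite ?val_inord_pred ?val_inord_letter ?eqxx ?(negbTE a0) //.
have /negbTE-> : (x : nat) != a.-1.
  by apply/eqP => e; apply: x1; apply: val_inj; rewrite /= e val_inord_pred.
have /negbTE-> // : (x : nat) != a.
by apply/eqP => e; apply: x2; apply: val_inj; rewrite /= e val_inord_letter.
Qed.

Lemma stransp_inord a k : is_letter n a -> k <= n -> s_ a (inord k) = inord (swapn a k).
Proof.
move=> ha hk; have hs : swapn a k <= n by apply: leq_swapn; case/andP: ha.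
by apply: val_inj => /=; rewrite stransp_val // !inordK.
Qed.

Lemma stransp2 a : s_ a * s_ a = 1.
Proof. exact: tperm2. Qed.

Lemma stransp_inv a : (s_ a)^-1 = s_ a.
Proof. exact: tpermV. Qed.

Lemma stransp_mulK p a : p * s_ a * s_ a = p.
Proof. by rewrite -mulgA stransp2 mulg1. Qed.

Lemma posnM_stransp p a k : is_letter n a -> k <= n -> posn (p * s_ a) k = posn p (swapn a k).
Proof. by move=> ha hk; rewrite /posn invMg permM stransp_inv stransp_inord. Qed.

Lemma descentM_stransp p a : is_letter n a -> descent (p * s_ a) a = ~~ descent p a.
Proof.
move=> ha; have [a0 an] := andP ha.
rewrite /descent !posnM_stransp //; last by lia.
rewrite swapn_pred swapn_self // -leqNgt ltn_neqAle.
suff -> : posn p a.-1 != posn p a by [].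
apply/eqP => /val_inj/perm_inj/(congr1 (@nat_of_ord _)).
by rewrite val_inord_pred // val_inord_letter //; lia.
Qed.

Lemma ninvM_stransp_desc p a : is_letter n a -> descent p a ->
  ninv p = (ninv (p * s_ a)).+1.
Proof.
move=> ha hd; have a0 : 0 < a by case/andP: ha.
pose X := p^-1 (inord a.-1); pose Y := p^-1 (inord a).
have pX : p X = a.-1 :> nat by rewrite permKV val_inord_pred.
have pY : p Y = a :> nat by rewrite permKV val_inord_letter.
have injp i k : p i = p k :> nat -> i = k by move/val_inj/perm_inj.
have same : forall ij, ij != (Y, X) -> inversion (p * s_ a) ij = inversion p ij.
  move=> [i j] ne; rewrite /inversion /=; case: ltnP => //= ij.
  rewrite !permM !stransp_val // ltn_swapn // !xpair_eqE.
    apply: contra ne => /andP[/eqP ej /eqP ei]; rewrite xpair_eqE.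
    by apply/andP; split; apply/eqP/injp; rewrite ?pX ?pY.
  apply/negP => /andP[/eqP ej /eqP ei].
  move: ij hd; have [-> ->] : j = Y /\ i = X by split; apply/injp; rewrite ?pX ?pY.
  by rewrite /descent /posn -/X -/Y; lia.
rewrite /ninv (bigD1 (Y, X)) // [in RHS](bigD1 (Y, X)) //=.
have -> : inversion p (Y, X) by rewrite /inversion /= pX pY ltn_predL a0 andbT.
have -> : inversion (p * s_ a) (Y, X) = false.
  by rewrite /inversion !permM !stransp_val // pX pY swapn_pred swapn_self //; lia.
by rewrite add1n add0n; congr _.+1; apply: eq_bigr => ij /same->.
Qed.

Lemma ninvM_stransp_asc p a : is_letter n a -> ~~ descent p a ->
  ninv (p * s_ a) = (ninv p).+1.
Proof.
move=> ha hd; rewrite -[in RHS](stransp_mulK p a).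
by rewrite -ninvM_stransp_desc // descentM_stransp.
Qed.

Lemma ninvM_stransp_le p a : is_letter n a -> ninv (p * s_ a) <= (ninv p).+1.
Proof.
move=> ha; case: (boolP (descent p a)) => hd.
  by rewrite (ninvM_stransp_desc ha hd) leqW.
by rewrite ninvM_stransp_asc.
Qed.

Lemma ninv1 : ninv 1 = 0.
Proof. by rewrite /ninv big1 // => -[i j] _; rewrite /inversion !perm1 /=; case: ltngtP. Qed.

Lemma prodw_nil : prodw n [::] = 1.
Proof. by rewrite /prodw big_nil. Qed.

Lemma prodw_cons a w : prodw n (a :: w) = s_ a * prodw n w.
Proof. by rewrite /prodw big_cons. Qed.

Lemma prodw_cat w1 w2 : prodw n (w1 ++ w2) = prodw n w1 * prodw n w2.
Proof. by rewrite /prodw big_cat. Qed.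

Lemma prodw_rcons w a : prodw n (rcons w a) = prodw n w * s_ a.
Proof. by rewrite -cats1 prodw_cat /prodw big_seq1. Qed.

Lemma ninvM_prodw_le p w : all (is_letter n) w -> ninv (p * prodw n w) <= ninv p + size w.
Proof.
elim/last_ind: w => [|w a IH]; first by rewrite prodw_nil mulg1 addn0.
rewrite all_rcons prodw_rcons mulgA size_rcons addnS => /andP[ha hw].
by apply: leq_trans (ninvM_stransp_le _ ha) _; rewrite ltnS IH.
Qed.

Lemma ninv_prodw_le w : all (is_letter n) w -> ninv (prodw n w) <= size w.
Proof. by move=> hw; have := ninvM_prodw_le 1 hw; rewrite mul1g ninv1. Qed.

Lemma increasing_bounded_id (f : nat -> nat) :
  (forall k, k < n -> f k < f k.+1) -> (forall k, k <= n -> f k <= n) ->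
  forall k, k <= n -> f k = k.
Proof.
move=> finc fb.
have up j k : k + j <= n -> f k + j <= f (k + j).
  elim: j => [|j IH] hk; first by rewrite !addn0.
  rewrite addnS in hk *; have := IH (ltnW hk); have := finc (k + j) hk; lia.
move=> k hk; have := up k 0 hk; have := up (n - k) k; rewrite add0n subnKC // => /(_ (leqnn n)).
by have := fb n (leqnn n); lia.
Qed.

Lemma no_descent_id p : (forall a, is_letter n a -> ~~ descent p a) -> p = 1.
Proof.
move=> nd; have hpos : forall k, k <= n -> posn p k = k.
  apply: increasing_bounded_id => [k kn|k _]; last by rewrite -ltnS ltn_ord.
  have := nd k.+1 ltac:(rewrite /is_letter; lia); rewrite /descent /= -leqNgt.
  rewrite leq_eqVlt => /orP[/eqP e|//].
  have : p^-1 (inord k.+1) = p^-1 (inord k) by apply: val_inj.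
  by move/perm_inj/(congr1 (@nat_of_ord _)); rewrite !inordK //; lia.
suff : p^-1 = 1 by move/(congr1 invg); rewrite invgK invg1.
apply/permP => x; rewrite perm1; apply: val_inj => /=.
by have := hpos x (leq_ord x); rewrite /posn inord_val.
Qed.

Lemma exists_ninv_word p :
  exists w, [/\ all (is_letter n) w, prodw n w = p & size w = ninv p].
Proof.
move: {2}(ninv p) (erefl (ninv p)) => k; elim: k p => [|k IH] p hk.
  exists [::]; split => //; rewrite prodw_nil; apply/esym/no_descent_id => a ha.
  by apply/negP => /(ninvM_stransp_desc ha); rewrite hk.
have [a ha hd] : exists2 a, is_letter n a & descent p a.
  case: (boolP [exists a : 'I_n, descent p a.+1]) => [/existsP[a hd]|/existsPn nd].
    by exists a.+1 => //; rewrite /is_letter ltn_ord.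
  suff p1 : p = 1 by move: hk; rewrite p1 ninv1.
  apply: no_descent_id => a /andP[a0 an].
  by have := nd (@Ordinal n a.-1 ltac:(lia)); rewrite /= prednK.
have hk' : ninv (p * s_ a) = k by apply: succn_inj; rewrite -hk (ninvM_stransp_desc ha hd).
have [w [hw pw sw]] := IH _ hk'.
exists (rcons w a); split; first by rewrite all_rcons ha.
  by rewrite prodw_rcons pw stransp_mulK.
by rewrite size_rcons sw hk' hk.
Qed.

Lemma ninvM_le p q : ninv (p * q) <= ninv p + ninv q.
Proof. by have [w [hw <- <-]] := exists_ninv_word q; exact: ninvM_prodw_le. Qed.

Lemma reducedE p w :
  reduced p w = [&& all (is_letter n) w, prodw n w == p & size w == ninv p].
Proof.
rewrite /reduced; case hw: (all _ w) => //=; case: eqP => //= <-.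
apply/allP/eqP => [minimal|sw k]; last first.
  rewrite mem_iota add0n => /andP[_ hk]; apply/allP => v.
  rewrite mem_words => /andP[/eqP sv hv]; apply: contraTneq hk => pv.
  by rewrite -leqNgt sw -pv -sv ninv_prodw_le.
apply/eqP; rewrite eqn_leq ninv_prodw_le // andbT leqNgt; apply/negP => hlt.
have [v [hv pv sv]] := exists_ninv_word (prodw n w).
have /allP/(_ v) := minimal (ninv (prodw n w)) ltac:(by rewrite mem_iota).
by rewrite mem_words sv eqxx pv eqxx hv => /(_ isT).
Qed.

Lemma reducedP p w :
  reflect [/\ all (is_letter n) w, prodw n w = p & size w = ninv p] (reduced p w).
Proof. by rewrite reducedE; apply: (iffP and3P) => -[? /eqP ? /eqP ?]. Qed.

Lemma exists_reduced p : exists w, reduced p w.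
Proof. by have [w hw] := exists_ninv_word p; exists w; apply/reducedP. Qed.

Lemma reduced_rcons p w a :
  reduced p (rcons w a) = [&& is_letter n a, descent p a & reduced (p * s_ a) w].
Proof.
rewrite !reducedE all_rcons prodw_rcons size_rcons.
case ha: (is_letter n a) => //=; case hw: (all _ w); rewrite ?andbF //=.
have -> : (prodw n w * s_ a == p) = (prodw n w == p * s_ a).
  by apply/eqP/eqP => [<-|->]; rewrite stransp_mulK.
case: eqP => [pw|_]; rewrite ?andbF //=.
case: (boolP (descent p a)) => hd /=; first by rewrite (ninvM_stransp_desc ha hd).
have := ninv_prodw_le hw; rewrite pw ninvM_stransp_asc // => le.
by apply/eqP; lia.
Qed.

Lemma reduced_cat p w1 w2 : reduced p (w1 ++ w2) ->
  reduced (prodw n w1) w1 /\ reduced (prodw n w2) w2.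
Proof.
move/reducedP => [h12 <-]; rewrite size_cat prodw_cat; move: h12.
rewrite all_cat => /andP[h1 h2] s12; have := ninvM_le (prodw n w1) (prodw n w2).
have := ninv_prodw_le h1; have := ninv_prodw_le h2 => le2 le1.
by split; apply/reducedP; split => //; lia.
Qed.

Lemma reduced_catE p w1 w2 : reduced p (w1 ++ w2) =
  [&& prodw n w1 * prodw n w2 == p, ninv (prodw n w1) + ninv (prodw n w2) == ninv p,
      reduced (prodw n w1) w1 & reduced (prodw n w2) w2].
Proof.
apply/idP/and4P => [hr|[/eqP <- /eqP e h1 h2]]; last first.
  have [l1 _ s1] := reducedP _ _ h1; have [l2 _ s2] := reducedP _ _ h2.
  by apply/reducedP; rewrite all_cat l1 l2 prodw_cat size_cat s1 s2.
have [h1 h2] := reduced_cat hr; have [_ <- s12] := reducedP _ _ hr.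
have [_ _ s1] := reducedP _ _ h1; have [_ _ s2] := reducedP _ _ h2.
by rewrite -prodw_cat eqxx -s1 -s2 -size_cat s12 eqxx h1 h2.
Qed.

Lemma reduced_catAA p x a z : reduced p (x ++ a :: a :: z) = false.
Proof.
apply/negP; rewrite -[a :: a :: z]/([:: a; a] ++ z) catA => /reduced_cat[/reducedP[hx]].
rewrite prodw_cat !prodw_cons prodw_nil mulg1 stransp2 mulg1 size_cat /= => _ e.
by move: hx; rewrite all_cat => /andP[/ninv_prodw_le]; rewrite -e; lia.
Qed.

Definition far a b := (a.+1 < b) || (b.+1 < a).
Definition adjacent a b := (b == a.+1) || (a == b.+1).

Lemma far_sym a b : far a b = far b a.
Proof. by rewrite /far orbC. Qed.

Lemma adjacent_sym a b : adjacent a b = adjacent b a.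
Proof. by rewrite /adjacent orbC. Qed.

Lemma stransp_conj a c : is_letter n a -> is_letter n c ->
  s_ a * s_ c * s_ a = tperm (inord (swapn a c.-1)) (inord (swapn a c)).
Proof.
move=> ha hc; rewrite -{1}stransp_inv -mulgA -conjgE /stransp tpermJ.
by rewrite -!/(stransp n _) !stransp_inord //; case/andP: hc; lia.
Qed.

Lemma stransp_comm a c : is_letter n a -> is_letter n c -> far a c ->
  s_ a * s_ c = s_ c * s_ a.
Proof.
move=> ha hc hac; have e : s_ a * s_ c * s_ a = s_ c.
  rewrite stransp_conj // !swapn_out //; apply/eqP;
    by move: hac ha hc; rewrite /far /is_letter; lia.
by rewrite -[in RHS]e stransp_mulK.
Qed.

Lemma stransp_braid a b : is_letter n a -> is_letter n b -> adjacent a b ->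
  s_ a * s_ b * s_ a = s_ b * s_ a * s_ b.
Proof.
move=> ha hb hab; wlog e : a b ha hb hab / b = a.+1 => [hwlog|].
  by case/orP: (hab) => /eqP e; [apply: hwlog | symmetry; apply: hwlog; rewrite 1?adjacent_sym].
subst b; have [a0 an] := andP ha.
by rewrite !stransp_conj // swapn_self // swapn_pred !swapn_out //; lia.
Qed.

Lemma descentM_far p a c : is_letter n a -> is_letter n c -> far a c ->
  descent (p * s_ c) a = descent p a.
Proof.
move=> ha hc hac; have [a0 an] := andP ha; have [c0 cn] := andP hc.
rewrite /descent !posnM_stransp ?(leq_trans (leq_pred a)) //.
by rewrite !swapn_out //; move: hac; rewrite /far; lia.
Qed.

Lemma descentM_adj p a b : is_letter n a -> is_letter n b -> adjacent a b ->
  descent p a -> descent p b -> descent (p * s_ a) b /\ descent (p * s_ a * s_ b) a.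
Proof.
move=> ha hb hab; have [a0 an] := andP ha; have [b0 bn] := andP hb.
rewrite /descent !posnM_stransp //; try solve [apply: leq_swapn; lia | lia].
case/orP: hab => /eqP e; subst.
- rewrite swapn_self // swapn_pred (@swapn_out a a.+1) ?(@swapn_out a.+1 a.-1) ?swapn_pred;
    try apply/eqP; rewrite /=; lia.
- rewrite swapn_self // swapn_pred (@swapn_out b b.+1) ?swapn_self ?(@swapn_out b.+1 b.-1);
    try apply/eqP; rewrite /=; lia.
Qed.

Lemma reduced_far_descents p a b : is_letter n a -> is_letter n b -> far a b ->
  descent p a -> descent p b ->
  exists x, reduced (p * s_ a) (rcons x b) /\ reduced (p * s_ b) (rcons x a).
Proof.
move=> ha hb hab hda hdb; have [x hx] := exists_reduced (p * s_ a * s_ b).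
have hba : far b a by rewrite far_sym.
exists x; rewrite !reduced_rcons ha hb !descentM_far // hda hdb hx.
by rewrite -mulgA stransp_comm // mulgA hx.
Qed.

Lemma reduced_adjacent_descents p a b : is_letter n a -> is_letter n b -> adjacent a b ->
  descent p a -> descent p b ->
  exists x, reduced (p * s_ a) (x ++ [:: a; b]) /\ reduced (p * s_ b) (x ++ [:: b; a]).
Proof.
move=> ha hb hab hda hdb; have [x hx] := exists_reduced (p * s_ a * s_ b * s_ a).
have [hab1 hab2] := descentM_adj ha hb hab hda hdb.
have [hba1 hba2] := descentM_adj hb ha (etrans (adjacent_sym b a) hab) hdb hda.
have cat2 c d : x ++ [:: c; d] = rcons (rcons x c) d by rewrite -!cats1 -catA.
exists x; rewrite !cat2 !reduced_rcons ha hb hab1 hab2 hba1 hba2 hx /=.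
by rewrite -2!mulgA [s_ b * _]mulgA stransp_braid 1?adjacent_sym // !mulgA hx.
Qed.

Inductive braid_move : seq nat -> seq nat -> Prop :=
| BraidFar a b of is_letter n a & is_letter n b & far a b :
    braid_move [:: a; b] [:: b; a]
| BraidAdjacent a b of is_letter n a & is_letter n b & adjacent a b :
    braid_move [:: a; b; a] [:: b; a; b].

Lemma reduced_braid_move p x y y' z : braid_move y y' ->
  reduced p (x ++ y ++ z) -> reduced p (x ++ y' ++ z).
Proof.
have prodw_swap v v' : braid_move v v' -> prodw n v = prodw n v'.
  case=> a b ha hb hab; rewrite !prodw_cons prodw_nil !mulg1 ?mulgA.
    exact: stransp_comm.
  exact: stransp_braid.
move=> hyy'; have hl : all (is_letter n) y = all (is_letter n) y'.
  by case: hyy' => a b ha hb _ /=; rewrite ha hb.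
have hs : size y = size y' by case: hyy'.
by rewrite !reducedE !all_cat !prodw_cat !size_cat hl hs (prodw_swap _ _ hyy').
Qed.

Section BraidInvariance.
Variable P : pred (seq nat).
Hypothesis P_braid : forall x y y' z, braid_move y y' -> P (x ++ y ++ z) -> P (x ++ y' ++ z).

(* Matsumoto's argument: by induction on the length of [p], two reduced words
   of [p] ending in different letters [a], [b] are linked through a reduced
   word ending in the longest element of the parabolic subgroup <s_a, s_b>. *)
Lemma reduced_braid_invariant p u u' z : reduced p u -> reduced p u' ->
  P (u ++ z) -> P (u' ++ z).
Proof.
move: {2}(ninv p) (erefl (ninv p)) => k; elim: k p u u' z => [|k IH] p u u' z hk.
  by move=> /reducedP[_ _ +] /reducedP[_ _ +]; rewrite hk => /size0nil-> /size0nil->.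
case/lastP: u => [|u a]; first by case/reducedP => _ _; rewrite hk.
case/lastP: u' => [|u' b] hu; first by case/reducedP => _ _; rewrite hk.
move: hu; rewrite !reduced_rcons => /and3P[ha hda hu] /and3P[hb hdb hu'].
have len c : is_letter n c -> descent p c -> ninv (p * s_ c) = k.
  by move=> hc hdc; apply: succn_inj; rewrite -hk (ninvM_stransp_desc hc hdc).
rewrite -!cats1 -!catA /=.
have [eab|nab] := eqVneq a b; first by subst b; exact: IH _ _ _ _ (len a ha hda) hu hu'.
case: (boolP (far a b)) => hfar.
  have [x [hxa hxb]] := reduced_far_descents ha hb hfar hda hdb.
  move=> /(IH _ _ _ _ (len a ha hda) hu hxa); rewrite -cats1 -catA /=.
  move=> /(P_braid (BraidFar hb ha (etrans (far_sym b a) hfar))) /=.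
  rewrite -[x ++ _]/(x ++ [:: a] ++ b :: z) catA cats1.
  exact: IH _ _ _ _ (len b hb hdb) hxb hu'.
have hadj : adjacent a b by move: nab hfar; rewrite /far /adjacent; lia.
have [x [hxa hxb]] := reduced_adjacent_descents ha hb hadj hda hdb.
move=> /(IH _ _ _ _ (len a ha hda) hu hxa); rewrite -catA /=.
move=> /(P_braid (BraidAdjacent ha hb hadj)) /=.
rewrite -[x ++ _]/(x ++ [:: b; a] ++ b :: z) catA.
exact: IH _ _ _ _ (len b hb hdb) hxb hu'.
Qed.

End BraidInvariance.

End Coxeter.

(** * Shuffles of reduced words *)

Definition lowerw (m : nat) (u : seq nat) := [seq x <- u | x <= m].
Definition upperw (m : nat) (u : seq nat) := [seq x - m | x <- u & m < x].

Lemma lowerw_cat m u v : lowerw m (u ++ v) = lowerw m u ++ lowerw m v.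
Proof. exact: filter_cat. Qed.

Lemma upperw_cat m u v : upperw m (u ++ v) = upperw m u ++ upperw m v.
Proof. by rewrite /upperw filter_cat map_cat. Qed.

Definition shuffle_reduced m n (sg : 'S_m.+1) (tu : 'S_n.+1) (u : seq nat) :=
  reduced sg (lowerw m u) && reduced tu (upperw m u).

Section ShuffleReduced.
Variables m n N : nat.
Hypothesis leN : N <= m + n.
Implicit Types (sg : 'S_m.+1) (tu : 'S_n.+1).

Lemma shuffle_reduced_catAA sg tu x a z :
  shuffle_reduced sg tu (x ++ a :: a :: z) = false.
Proof.
rewrite /shuffle_reduced lowerw_cat upperw_cat /lowerw /upperw /=.
by case: leqP => _ /=; rewrite reduced_catAA ?andbF.
Qed.

Lemma shuffle_reduced_braid sg tu x y y' z : braid_move N y y' ->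
  shuffle_reduced sg tu (x ++ y ++ z) -> shuffle_reduced sg tu (x ++ y' ++ z).
Proof.
have lower c : is_letter N c -> c <= m -> is_letter m c by rewrite /is_letter; lia.
have upper c : is_letter N c -> m < c -> is_letter n (c - m) by rewrite /is_letter; lia.
rewrite /shuffle_reduced !lowerw_cat !upperw_cat /lowerw /upperw.
case=> a b ha hb hab /=; case: (leqP a m) => am; case: (leqP b m) => bm //=;
  rewrite ?reduced_catAA ?andbF // => /andP[hl hu]; apply/andP; split => //.
- move: hl; apply: (reduced_braid_move (y := [:: a; b]) (y' := [:: b; a])).
  by constructor; auto.
- move: hu; apply: (reduced_braid_move (y := [:: a - m; b - m]) (y' := [:: b - m; a - m])).
  by constructor; auto; move: hab; rewrite /far; lia.
- move: hl; apply: (reduced_braid_move (y := [:: a; b; a]) (y' := [:: b; a; b])).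
  by constructor; auto.
- move: hu; apply: (reduced_braid_move (y := [:: a - m; b - m; a - m])
    (y' := [:: b - m; a - m; b - m])).
  by constructor; auto; move: hab; rewrite /adjacent; lia.
Qed.

Lemma shuffle_reduced_prefix sg tu x z : shuffle_reduced sg tu (x ++ z) ->
  shuffle_reduced (prodw m (lowerw m x)) (prodw n (upperw m x)) x.
Proof.
rewrite /shuffle_reduced lowerw_cat upperw_cat.
by case/andP => /reduced_cat[-> _] /reduced_cat[-> _].
Qed.

Lemma shuffle_reduced_invariant sg tu (p : 'S_N.+1) u u' :
  reduced p u -> reduced p u' -> shuffle_reduced sg tu u -> shuffle_reduced sg tu u'.
Proof.
move=> hu hu'; rewrite -[u]cats0 -[u']cats0.
exact: (reduced_braid_invariant (@shuffle_reduced_braid sg tu) hu hu').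
Qed.

(* The last letter [a] of a shuffle of reduced words cannot be a descent of the
   preceding prefix: otherwise the prefix could be rewritten, by braid moves,
   to end with [a], producing the non-reduced factor [a; a]. *)
Lemma shuffle_reduced_reduced sg tu u : shuffle_reduced sg tu u ->
  all (is_letter N) u -> reduced (prodw N u) u.
Proof.
elim/last_ind: u sg tu => [|u a IH] sg tu hS; first by rewrite reducedE prodw_nil ninv1 eqxx.
rewrite all_rcons => /andP[ha hu]; rewrite -cats1 in hS.
have hu0 := IH _ _ (shuffle_reduced_prefix hS) hu.
rewrite reduced_rcons ha prodw_rcons stransp_mulK hu0 descentM_stransp // andbT /=.
apply/negP => hd; have [y hy] := exists_reduced (prodw N u * stransp N a).
have hya : reduced (prodw N u) (rcons y a) by rewrite reduced_rcons ha hd hy.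
have := reduced_braid_invariant (@shuffle_reduced_braid sg tu) hu0 hya hS.
by rewrite -cats1 -catA shuffle_reduced_catAA.
Qed.

End ShuffleReduced.

Lemma shuffle_cons a v b w : shuffle (a :: v) (b :: w) =
  map (cons a) (shuffle v (b :: w)) ++ map (cons b) (shuffle (a :: v) w).
Proof. by []. Qed.

Lemma count_mem_map_cons (a c : nat) u (S : seq (seq nat)) :
  count_mem (c :: u) (map (cons a) S) = (a == c) * count_mem u S.
Proof.
elim: S => [|s S IH] /=; first by rewrite muln0.
by rewrite IH eqseq_cons mulnDr; case: (a == c); rewrite ?mul1n ?mul0n.
Qed.

Lemma count_nil_map_cons a (S : seq (seq nat)) : count_mem [::] (map (cons a) S) = 0.
Proof. by elim: S. Qed.

Lemma filter_split_nil (Q R : pred nat) : (forall x, R x = ~~ Q x) ->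
  forall s t, all R t -> (filter Q s == [::]) && (filter R s == t) = (s == t).
Proof.
move=> RQ s t ht; have eqR : R =1 predC Q by [].
have filter0 r : (filter Q r == [::]) = all R r.
  by rewrite (eq_all eqR) all_predC has_filter negbK.
rewrite filter0; case: (boolP (all R s)) => hs /=; first by rewrite (all_filterP hs).
by apply/esym; apply: contraNF hs => /eqP->.
Qed.

Lemma count_mem_shuffle (P : pred nat) u v w : all P v -> all (predC P) w ->
  count_mem u (shuffle v w) = (filter P u == v) && (filter (predC P) u == w).
Proof.
have splitP := filter_split_nil (Q := P) (R := predC P) (fun _ => erefl).
have splitC := filter_split_nil (Q := predC P) (R := P) (fun x => esym (negbK (P x))).
elim: u v w => [|c u IH] [|a v] w hv hw.
- by case: w {hw}.
- case: w hw => [|b w] hw //.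
  by rewrite shuffle_cons count_cat !count_nil_map_cons.
- by rewrite [count_mem _ _]/= addn0 splitP // eq_sym.
case: w hw => [|b w] hw; first by rewrite [count_mem _ _]/= addn0 andbC splitC // eq_sym.
have /andP[Pa hv'] := hv; have /andP[nPb hw'] := hw.
rewrite shuffle_cons count_cat !count_mem_map_cons !IH //=.
case: (boolP (P c)) => Pc; rewrite ?Pc ?(negbTE Pc) /= eqseq_cons.
- have /negbTE-> : b != c by apply: contraNneq nPb => ->.
  by rewrite [c == a]eq_sym mul0n addn0; case: (a == c); rewrite ?mul1n.
- have /negbTE-> : a != c by apply: contraNneq Pc => <-.
  by rewrite [c == b]eq_sym mul0n add0n; case: (b == c); rewrite ?mul1n ?andbF.
Qed.

Lemma count_shuffle_shiftw m u v w : all (fun x => x <= m) v -> all (fun x => 0 < x) w ->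
  count_mem u (shuffle v (shiftw m w)) = (lowerw m u == v) && (upperw m u == w).
Proof.
move=> hv hw; rewrite (count_mem_shuffle (P := fun x => x <= m)) //; last first.
  by rewrite all_map; apply: sub_all hw => x /= x0; rewrite -ltnNge -{1}[m]addn0 ltn_add2l.
congr andb.
have -> : upperw m u = map (subn^~ m) (filter (predC (leq^~ m)) u).
  by rewrite /upperw; congr map; apply: eq_filter => x /=; rewrite ltnNge.
rewrite /shiftw; apply/eqP/eqP => [->|<-].
  by rewrite -map_comp map_id_in // => x _ /=; rewrite addKn.
rewrite -map_comp map_id_in // => x; rewrite mem_filter /= -ltnNge => /andP[mx _].
by rewrite subnKC // ltnW.
Qed.

Lemma size_lowerw_upperw m u : size (lowerw m u) + size (upperw m u) = size u.
Proof.
rewrite /lowerw /upperw size_map !size_filter -(count_predC (leq^~ m) u).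
by congr addn; apply: eq_count => x /=; rewrite ltnNge.
Qed.

Lemma all_letter_lowerw_upperw m N u : m <= N -> all (is_letter m) (lowerw m u) ->
  all (is_letter (N - m)) (upperw m u) = all (is_letter N) u.
Proof.
rewrite /lowerw /upperw all_map !all_filter => mN hl.
apply/allP/allP => H x hx; have := allP hl x hx; have := H x hx.
  by rewrite /is_letter /=; case: leqP => //=; lia.
by rewrite /is_letter /=; case: leqP => //=; lia.
Qed.

(** * The subspace Pi *)

(* In [mulW] the right factor is read at level [N - m] in [ring_scope]: the
   subtraction happens in the ring ['Z_N.+1] of [m : 'I_N.+1], which yields
   [right_level N m], not the truncated difference [N - m]. *)
Definition right_level (N m : nat) : nat := (N + ((N.+1 - m) %% N.+1)%N)%R.

Section Algebra.
Variable K : fieldType.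
Local Open Scope ring_scope.
Import GRing.Theory.

Lemma sum_uniq_single (T : eqType) (s : seq T) (a : T) (F : T -> K) : uniq s ->
  {in s, forall v, v != a -> F v = 0} -> \sum_(v <- s) F v = (a \in s)%:R * F a.
Proof.
move=> us F0; case: (boolP (a \in s)) => ha; last first.
  by rewrite mul0r big1_seq // => v /andP[_ hv]; apply: F0 => //; apply: contraNneq ha => <-.
rewrite mul1r (bigD1_seq a) //= big1_seq ?addr0 // => v /andP[nva hv].
exact: F0.
Qed.

Lemma pi_elemE n (p : 'S_n.+1) w N : pi_elem K p (w, N) = ((N == n) && reduced p w)%:R.
Proof. by rewrite /pi_elem /=; case: ifP. Qed.

Lemma inPi_eq (x y : Wt K) : x =1 y -> inPi x -> inPi y.
Proof. by move=> e [s hs]; exists s => b; rewrite -e. Qed.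

Lemma inPi_sum (I : Type) (r : seq I) (c : I -> K) (F : I -> Wt K) :
  (forall i, inPi (F i)) -> inPi (fun b => \sum_(i <- r) c i * F i b).
Proof.
move=> H; elim: r => [|i r [t ht]]; first by exists [::] => b; rewrite !big_nil.
have [s hs] := H i; exists (map (fun p => (c i * p.1, p.2)) s ++ t) => b.
rewrite big_cons big_cat big_map ht hs mulr_sumr; congr (_ + _).
by apply: eq_bigr => p _; rewrite mulrA.
Qed.

Lemma inPi_pi_elem n (p : 'S_n.+1) : inPi (pi_elem K p).
Proof. by exists [:: (1, existT _ n p)] => b; rewrite big_seq1 mul1r. Qed.

Lemma inPiPi_eq (x y : WWt K) : (forall a b, x a b = y a b) -> inPiPi x -> inPiPi y.
Proof. by move=> e [s hs]; exists s => a b; rewrite -e. Qed.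

Lemma inPiPi_sum (I : Type) (r : seq I) (c : I -> K) (F : I -> WWt K) :
  (forall i, inPiPi (F i)) -> inPiPi (fun a b => \sum_(i <- r) c i * F i a b).
Proof.
move=> H; elim: r => [|i r [t ht]]; first by exists [::] => a b; rewrite !big_nil.
have [s hs] := H i; exists (map (fun p => (c i * p.1, p.2)) s ++ t) => a b.
rewrite big_cons big_cat big_map ht hs mulr_sumr; congr (_ + _).
by apply: eq_bigr => p _; rewrite !mulrA.
Qed.

Lemma eq_mulW (x x' y y' : Wt K) : x =1 x' -> y =1 y' -> mulW x y =1 mulW x' y'.
Proof.
move=> ex ey [u N]; rewrite /mulW /=.
by apply: eq_bigr => m _; apply: eq_bigr => k _; apply: eq_bigr => v _; apply: eq_bigr => w _;
  rewrite ex ey.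
Qed.

Lemma mulW_suml (I : Type) (r : seq I) (c : I -> K) (F : I -> Wt K) (y : Wt K) b :
  mulW (fun z => \sum_(i <- r) c i * F i z) y b = \sum_(i <- r) c i * mulW (F i) y b.
Proof.
case: b => u N; rewrite /mulW /=; symmetry.
under eq_bigr do rewrite mulr_sumr; rewrite exchange_big; apply: eq_bigr => m _.
under eq_bigr do rewrite mulr_sumr; rewrite exchange_big; apply: eq_bigr => k _.
under eq_bigr do rewrite mulr_sumr; rewrite exchange_big; apply: eq_bigr => v _.
under eq_bigr do rewrite mulr_sumr; rewrite exchange_big; apply: eq_bigr => w _.
by rewrite mulr_suml -sumrMnl; apply: eq_bigr => i _; rewrite mulrnAr mulrA.
Qed.

Lemma mulW_sumr (I : Type) (r : seq I) (c : I -> K) (F : I -> Wt K) (x : Wt K) b :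
  mulW x (fun z => \sum_(i <- r) c i * F i z) b = \sum_(i <- r) c i * mulW x (F i) b.
Proof.
case: b => u N; rewrite /mulW /=; symmetry.
under eq_bigr do rewrite mulr_sumr; rewrite exchange_big; apply: eq_bigr => m _.
under eq_bigr do rewrite mulr_sumr; rewrite exchange_big; apply: eq_bigr => k _.
under eq_bigr do rewrite mulr_sumr; rewrite exchange_big; apply: eq_bigr => v _.
under eq_bigr do rewrite mulr_sumr; rewrite exchange_big; apply: eq_bigr => w _.
by rewrite mulr_sumr -sumrMnl; apply: eq_bigr => i _; rewrite mulrnAr mulrCA.
Qed.

Lemma sum_words_single (l M1 M2 : nat) (L U : seq nat) (c : K) : size L + size U = l ->
  \sum_(k < l.+1) \sum_(v <- words k M1) \sum_(w <- words (l - k) M2)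
     ((v == L) && (w == U))%:R * c =
  (all (is_letter M1) L && all (is_letter M2) U)%:R * c.
Proof.
move=> sLU; have hL : (size L < l.+1)%N by rewrite ltnS -sLU leq_addr.
have sum_w k v : \sum_(w <- words (l - k) M2) ((v == L) && (w == U))%:R * c =
    (U \in words (l - k) M2)%:R * ((v == L)%:R * c).
  rewrite (sum_uniq_single (a := U)) ?uniq_words ?eqxx ?andbT // => w _ /negbTE->.
  by rewrite andbF mul0r.
have sum_v k : \sum_(v <- words k M1) (U \in words (l - k) M2)%:R * ((v == L)%:R * c) =
    (L \in words k M1)%:R * ((U \in words (l - k) M2)%:R * c).
  rewrite (sum_uniq_single (a := L)) ?uniq_words ?eqxx ?mul1r // => v _ /negbTE->.
  by rewrite mul0r mulr0.
under eq_bigr => k _ do under eq_bigr => v _ do rewrite sum_w.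
under eq_bigr => k _ do rewrite sum_v.
rewrite (sum_uniq_single (a := Ordinal hL)) ?index_enum_uniq ?mem_index_enum //=.
  rewrite mul1r !mem_words eqxx -sLU addKn eqxx mulrA -natrM mulnb.
  by [].
move=> k _ nk; rewrite mem_words; case: eqP => [e|_]; last by rewrite mul0r.
by case/negP: nk; apply/eqP/val_inj.
Qed.

Lemma mulW_pi_elem m0 n0 (sg : 'S_m0.+1) (tu : 'S_n0.+1) u N :
  mulW (pi_elem K sg) (pi_elem K tu) (u, N) =
  [&& (m0 <= N)%N, right_level N m0 == n0, shuffle_reduced sg tu u
    & all (is_letter N) u]%:R.
Proof.
rewrite /mulW /=; case: (leqP m0 N) => [lemN|ltNm] /=; last first.
  apply: big1 => m _; apply: big1 => k _; apply: big1 => v _; apply: big1 => w _.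
  by rewrite pi_elemE ltn_eqF /= ?mul0r ?mul0rn // (leq_trans (ltn_ord m)).
rewrite (bigD1 (Ordinal (lemN : m0 < N.+1)%N)) //= [X in _ + X]big1 ?addr0 => [|m ne]; last first.
  apply: big1 => k _; apply: big1 => v _; apply: big1 => w _.
  have /negbTE mm0 : (m : nat) != m0 by apply: contraNneq ne => e; apply/eqP/val_inj.
  by rewrite pi_elemE mm0 /= mul0r mul0rn.
rewrite -/(right_level N m0); pose L := lowerw m0 u; pose U := upperw m0 u.
pose c : K := (reduced sg L && ((right_level N m0 == n0) && reduced tu U))%:R.
have term k v w : v \in words k m0 -> w \in words (size u - k) (N - m0) ->
    pi_elem K sg (v, m0) * pi_elem K tu (w, right_level N m0) *+
      count_mem u (shuffle v (shiftw m0 w)) = ((v == L) && (w == U))%:R * c.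
  rewrite !mem_words => /andP[_ hv] /andP[_ hw].
  rewrite count_shuffle_shiftw; first last.
  - by apply: sub_all hw => x /andP[].
  - by apply: sub_all hv => x /andP[].
  rewrite ![L == _]eq_sym ![U == _]eq_sym.
  case: eqP => [->|_]; case: eqP => [->|_]; rewrite ?andbF /= ?mulr0n ?mul0r //.
  by rewrite !pi_elemE eqxx mulr1n mul1r -natrM mulnb.
under eq_bigr => k _ do under eq_big_seq => v hv do under eq_big_seq => w hw do
  rewrite (term k v w hv hw).
rewrite sum_words_single; last exact: size_lowerw_upperw.
rewrite /c -natrM mulnb /shuffle_reduced -/L -/U.
case hL: (reduced sg L) => /=; last by rewrite !andbF.
have hlL : all (is_letter m0) L by case/reducedP: hL.
by rewrite hlL all_letter_lowerw_upperw //= andbC -andbA.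
Qed.

Lemma inPi_reduced_class N (P : pred (seq nat)) :
  (forall (p : 'S_N.+1) u u', reduced p u -> reduced p u' -> P u -> P u') ->
  (forall u, P u -> reduced (prodw N u) u) ->
  inPi (fun b => ((b.2 == N) && P b.1)%:R : K).
Proof.
move=> P_inv P_red.
pose Q (p : 'S_N.+1) := has (fun v => P v && reduced p v) (words (ninv p) N).
exists [seq (1, existT _ N p) | p <- index_enum {perm 'I_N.+1} & Q p] => -[u N'] /=.
rewrite big_map; under eq_bigr => p _ do rewrite mul1r pi_elemE /=.
rewrite (sum_uniq_single (a := prodw N u)) ?filter_uniq ?index_enum_uniq //; last first.
  move=> p _ np; case: (reducedP p u) => [[_ pu _]|_]; last by rewrite andbF.
  by rewrite pu eqxx in np.
rewrite mem_filter mem_index_enum andbT -natrM mulnb.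
case: (N' == N); rewrite /= ?andbF //.
suff -> : P u = Q (prodw N u) && reduced (prodw N u) u by [].
apply/idP/andP => [Pu|[hQ hu]]; last first.
  by have /hasP[v _ /andP[Pv hv]] := hQ; exact: P_inv hv hu Pv.
have hu := P_red u Pu; split => //; apply/hasP; exists u; last by rewrite Pu.
by case/reducedP: hu => hl _ su; rewrite mem_words su eqxx.
Qed.

Lemma inPi_mulW_pi_elem m0 n0 (sg : 'S_m0.+1) (tu : 'S_n0.+1) :
  inPi (mulW (pi_elem K sg) (pi_elem K tu)).
Proof.
pose P N' u := [&& (m0 <= N')%N, right_level N' m0 == n0, shuffle_reduced sg tu u
  & all (is_letter N') u].
have leN N' : right_level N' m0 = n0 -> (N' <= m0 + n0)%N.
  by move=> <-; apply: leq_trans (leq_addl m0 _); exact: leq_addr.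
apply: (inPi_eq _ (inPi_sum (iota 0 n0.+1) (fun=> 1)
  (fun N' => inPi_reduced_class (N := N') (P := P N') _ _))) => [[u N]|N'|N' u].
- rewrite (sum_uniq_single (a := N)) ?iota_uniq //; last first.
    by move=> N' _ /negbTE nN; rewrite /= eq_sym nN mulr0.
  rewrite mulW_pi_elem mem_iota /= eqxx mul1r ltnS -natrM mulnb.
  case: (leqP N n0) => //= ltn0.
  suff /negbTE-> : right_level N m0 != n0 by rewrite /= andbF.
  by apply: contraTneq ltn0 => <-; rewrite -leqNgt leq_addr.
- move=> p u u' hu hu' /and4P[mN /eqP lev hS _]; rewrite /P mN lev eqxx /=.
  have [hl _ _] := reducedP _ _ hu'.
  by rewrite (shuffle_reduced_invariant (leN _ lev) hu hu' hS) hl.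
- by case/and4P=> mN /eqP lev hS hl; exact: (shuffle_reduced_reduced (leN _ lev) hS hl).
Qed.

Lemma inPi_unitW : inPi (unitW K).
Proof.
apply: inPi_eq (inPi_pi_elem (1 : 'S_0.+1)) => -[w n].
rewrite pi_elemE /unitW /=.
have -> : reduced (1 : 'S_0.+1) w = (w == [::]).
  case: w => [|i w]; first by rewrite reducedE prodw_nil ninv1 eqxx.
  by rewrite reducedE /= /is_letter leqn0 lt0n andNb.
by rewrite andbC; case: (_ && _).
Qed.

Lemma inPi_mulW (x y : Wt K) : inPi x -> inPi y -> inPi (mulW x y).
Proof.
move=> [s hs] [t ht].
apply: (inPi_eq _ (inPi_sum s (fun p => p.1) (fun p => inPi_sum t (fun q => q.1)
  (fun q => inPi_mulW_pi_elem (projT2 p.2) (projT2 q.2))))) => b.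
rewrite (eq_mulW hs ht) mulW_suml; apply: eq_bigr => p _.
by rewrite mulW_sumr.
Qed.

Lemma homog_pi_elem d n (p : 'S_n.+1) :
  homog d (pi_elem K p) =1 (fun b => (ninv p == d)%:R * pi_elem K p b).
Proof.
move=> [w N]; rewrite /homog /= pi_elemE.
case: (reducedP p w) => [[_ _ <-]|_]; rewrite ?andbF.
  by case: (size w == d); rewrite ?mul1r ?mul0r.
by rewrite mulr0; case: ifP.
Qed.

Lemma inPi_homog d (x : Wt K) : inPi x -> inPi (homog d x).
Proof.
move=> [s hs].
apply: (inPi_eq _ (inPi_sum s (fun p => p.1 * (ninv (projT2 p.2) == d)%:R)
  (fun p => inPi_pi_elem (projT2 p.2)))) => b.
have -> : homog d x b = \sum_(p <- s) p.1 * homog d (pi_elem K (projT2 p.2)) b.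
  rewrite /homog hs; case: ifP => // _; by rewrite big1 // => p _; rewrite mulr0.
by apply: eq_bigr => p _; rewrite homog_pi_elem mulrA.
Qed.

Lemma inPiPi_comulW_pi_elem n (p : 'S_n.+1) : inPiPi (comulW (pi_elem K p)).
Proof.
pose r := [seq qr <- index_enum ({perm 'I_n.+1} * {perm 'I_n.+1})%type |
  (qr.1 * qr.2 == p)%g && (ninv qr.1 + ninv qr.2 == ninv p)%N].
exists [seq (1, (existT _ n qr.1, existT _ n qr.2)) | qr <- r] => -[a1 n1] [b1 n2].
rewrite big_map; under eq_bigr do rewrite mul1r !pi_elemE -natrM mulnb /=.
rewrite /comulW pi_elemE /=.
rewrite (sum_uniq_single (a := (prodw n a1, prodw n b1))) ?filter_uniq ?index_enum_uniq //;
  last first.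
  move=> [q q'] _ /=; rewrite xpair_eqE negb_and.
  case: (reducedP q a1) => [[_ -> _]|_]; last by rewrite !andbF.
  by case: (reducedP q' b1) => [[_ -> _]|_]; rewrite ?eqxx ?andbF.
rewrite mem_filter mem_index_enum andbT -natrM mulnb /=.
case: (n1 =P n) => [->|_]; last by rewrite /= andbF; case: ifP.
case: (n2 =P n) => [->|/eqP ne2]; last by rewrite eq_sym (negbTE ne2) !andbF.
rewrite !eqxx /=.
by rewrite reduced_catE !andbA.
Qed.

Lemma inPiPi_comulW (x : Wt K) : inPi x -> inPiPi (comulW x).
Proof.
move=> [s hs].
apply: (inPiPi_eq _ (inPiPi_sum s (fun p => p.1)
  (fun p => inPiPi_comulW_pi_elem (projT2 p.2)))) => a b.
rewrite /comulW; case: (a.2 == b.2); first by rewrite hs.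
by rewrite big1 // => p _; rewrite mulr0.
Qed.

End Algebra.

Theorem theorem4p1 (K : fieldType) :
  [/\ inPi (unitW K),
      (forall x y : Wt K, inPi x -> inPi y -> inPi (mulW x y)),
      (forall x : Wt K, inPi x -> inPiPi (comulW x)) &
      (forall (d : nat) (x : Wt K), inPi x -> inPi (homog d x))].
Proof.
split.
- exact: inPi_unitW.
- exact: inPi_mulW.
- exact: inPiPi_comulW.
- exact: inPi_homog.
Qed.
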